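(* Let $\mathbb A$ be an abelian category with enough projective objects. Let $(f_0,f_1):a\to b$ be a morphism in $\mathbb A^{[1]}_c$ and let $g:\mathrm{Ker}(a)\to\mathrm{Ker}(b)$ and $h:\mathrm{Coker}(a)\to\mathrm{Coker}(b)$ be the induced morphisms. Then $(f_0,f_1)$ is fully cofaithful in $\mathbb A^{[1]}_c$ if and only if $h$ is an isomorphism and $g$ is an epimorphism in $\mathbb A$.
   Context: Let $\mathbb A$ be an abelian category. The 2-category $\mathbb A^{[1]}$ has as objects the morphisms $a:A_1\to A_0$ of $\mathbb A$. For objects $a:A_1\to A_0$ and $b:B_1\to B_0$, a morphism $a\to b$ is a pair $(f_0,f_1)$ of morphisms $f_i:A_i\to B_i$ of $\mathbb A$ with $b f_1=f_0 a$; composition is componentwise. A 2-arrow $(f_0,f_1)\Rightarrow(g_0,g_1)$ between morphisms $a\to b$ is a morphism $\alpha:A_0\to B_1$ of $\mathbb A$ with $f_1-g_1=\alpha a$ and $f_0-g_0=b\alpha$; vertical composition is addition of such $\alpha$'s, and whiskering is given by $(h_0,h_1)\circ\alpha=h_1\alpha$ and $\alpha\circ(e_0,e_1)=\alpha e_0$. All 2-arrows are invertible, so each $\mathbf{Hom}(a,b)$ is a groupoid. $\mathbb A^{[1]}_c$ is the full 2-subcategory of $\mathbb A^{[1]}$ on the objects $a:A_1\to A_0$ with $A_0$ projective in $\mathbb A$. A morphism $(f_0,f_1):a\to b$ induces $g:\mathrm{Ker}(a)\to\mathrm{Ker}(b)$ (restriction of $f_1$) and $h:\mathrm{Coker}(a)\to\mathrm{Coker}(b)$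 (induced by $f_0$). A morphism $f:a\to b$ of $\mathbb A^{[1]}_c$ is fully cofaithful in $\mathbb A^{[1]}_c$ if for every object $x$ of $\mathbb A^{[1]}_c$ the functor $-\circ f:\mathbf{Hom}(b,x)\to\mathbf{Hom}(a,x)$ is full and faithful. *)

From HB Require Import structures.
From mathcomp Require Import all_boot all_algebra.
Set Implicit Arguments. Unset Strict Implicit. Unset Printing Implicit Defensive.
Import GRing.Theory.
Local Open Scope ring_scope.

Record PreAddCat := {
  Ob :> Type;
  Mor : Ob -> Ob -> zmodType;
  mcomp : forall A B C : Ob, Mor B C -> Mor A B -> Mor A C;
  idm : forall A : Ob, Mor A A;
  compA : forall (A B C D : Ob) (h : Mor C D) (g : Mor B C) (f : Mor A B),
      mcomp h (mcomp g f) = mcomp (mcomp h g) f;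
  comp1m : forall (A B : Ob) (f : Mor A B), mcomp (idm B) f = f;
  compm1 : forall (A B : Ob) (f : Mor A B), mcomp f (idm A) = f;
  compDl : forall (A B C : Ob) (g g' : Mor B C) (f : Mor A B),
      mcomp (g + g') f = mcomp g f + mcomp g' f;
  compDr : forall (A B C : Ob) (g : Mor B C) (f f' : Mor A B),
      mcomp g (f + f') = mcomp g f + mcomp g f'
}.

Arguments Mor {p} _ _.
Arguments mcomp {p A B C}.
Arguments idm {p}.

Section Notions.
Variable C : PreAddCat.

Definition is_mono (A B : C) (f : Mor A B) : Prop :=
  forall (X : C) (u v : Mor X A), mcomp f u = mcomp f v -> u = v.

Definition is_epi (A B : C) (f : Mor A B) : Prop :=
  forall (X : C) (u v : Mor B X), mcomp u f = mcomp v f -> u = v.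

Definition is_iso (A B : C) (f : Mor A B) : Prop :=
  exists g : Mor B A, mcomp g f = idm A /\ mcomp f g = idm B.

Definition is_kernel (A B K : C) (f : Mor A B) (k : Mor K A) : Prop :=
  mcomp f k = 0 /\
  forall (X : C) (x : Mor X A), mcomp f x = 0 ->
    exists! u : Mor X K, mcomp k u = x.

Definition is_cokernel (A B Q : C) (f : Mor A B) (c : Mor B Q) : Prop :=
  mcomp c f = 0 /\
  forall (X : C) (x : Mor B X), mcomp x f = 0 ->
    exists! u : Mor Q X, mcomp u c = x.

Definition projective (P : C) : Prop :=
  forall (A B : C) (e : Mor A B) (x : Mor P B),
    is_epi e -> exists y : Mor P A, mcomp e y = x.

Definition abelian : Prop :=
  (exists Z : C, idm Z = 0) /\
  (forall A B : C, exists (S : C) (i1 : Mor A S) (i2 : Mor B S)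
                          (p1 : Mor S A) (p2 : Mor S B),
      [/\ mcomp p1 i1 = idm A, mcomp p2 i2 = idm B, mcomp p1 i2 = 0,
          mcomp p2 i1 = 0 & mcomp i1 p1 + mcomp i2 p2 = idm S]) /\
  (forall (A B : C) (f : Mor A B), exists (K : C) (k : Mor K A), is_kernel f k) /\
  (forall (A B : C) (f : Mor A B), exists (Q : C) (c : Mor B Q), is_cokernel f c) /\
  (forall (A B : C) (m : Mor A B), is_mono m ->
      exists (D : C) (f : Mor B D), is_kernel f m) /\
  (forall (A B : C) (e : Mor A B), is_epi e ->
      exists (D : C) (f : Mor D A), is_cokernel f e).

Definition enough_projectives : Prop :=
  forall A : C, exists (P : C) (e : Mor P A), projective P /\ is_epi e.

(* The 2-category A^[1]: objects are arrows a : A1 -> A0.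
   (f0, f1) : a -> b is a morphism iff b f1 = f0 a. *)
Definition arrow_mor (A1 A0 B1 B0 : C) (a : Mor A1 A0) (b : Mor B1 B0)
  (f0 : Mor A0 B0) (f1 : Mor A1 B1) : Prop :=
  mcomp b f1 = mcomp f0 a.

Definition two_arrow (A1 A0 B1 B0 : C) (a : Mor A1 A0) (b : Mor B1 B0)
  (f0 g0 : Mor A0 B0) (f1 g1 : Mor A1 B1) (alpha : Mor A0 B1) : Prop :=
  f1 - g1 = mcomp alpha a /\ f0 - g0 = mcomp b alpha.

(* For a morphism f = (f0,f1) : a -> b, and x : X1 -> X0, the functor
   - o f : Mor(b,x) -> Mor(a,x) sends (k0,k1) to (k0 f0, k1 f1) and a
   2-arrow alpha to alpha f0. *)
Definition precomp_full (A1 A0 B1 B0 X1 X0 : C) (a : Mor A1 A0) (b : Mor B1 B0)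
  (x : Mor X1 X0) (f0 : Mor A0 B0) (f1 : Mor A1 B1) : Prop :=
  forall (k0 l0 : Mor B0 X0) (k1 l1 : Mor B1 X1),
    arrow_mor b x k0 k1 -> arrow_mor b x l0 l1 ->
    forall beta : Mor A0 X1,
      two_arrow a x (mcomp k0 f0) (mcomp l0 f0) (mcomp k1 f1) (mcomp l1 f1) beta ->
      exists alpha : Mor B0 X1,
        two_arrow b x k0 l0 k1 l1 alpha /\ mcomp alpha f0 = beta.

Definition precomp_faithful (A1 A0 B1 B0 X1 X0 : C) (a : Mor A1 A0) (b : Mor B1 B0)
  (x : Mor X1 X0) (f0 : Mor A0 B0) (f1 : Mor A1 B1) : Prop :=
  forall (k0 l0 : Mor B0 X0) (k1 l1 : Mor B1 X1),
    arrow_mor b x k0 k1 -> arrow_mor b x l0 l1 ->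
    forall alpha alpha' : Mor B0 X1,
      two_arrow b x k0 l0 k1 l1 alpha -> two_arrow b x k0 l0 k1 l1 alpha' ->
      mcomp alpha f0 = mcomp alpha' f0 -> alpha = alpha'.

(* (f0,f1) : a -> b is fully cofaithful in A^[1]_c: for every object
   x : X1 -> X0 of A^[1]_c (i.e. X0 projective), - o f is full and faithful. *)
Definition fully_cofaithful_c (A1 A0 B1 B0 : C) (a : Mor A1 A0) (b : Mor B1 B0)
  (f0 : Mor A0 B0) (f1 : Mor A1 B1) : Prop :=
  forall (X1 X0 : C) (x : Mor X1 X0), projective X0 ->
    precomp_full a b x f0 f1 /\ precomp_faithful a b x f0 f1.

End Notions.

(* Write a morphism (f0, f1) : a -> b as the commutative square b f1 = f0 a.
   The proof goes through one intermediate notion: the square is a pushout,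
   i.e. every cocone (k1 : B1 -> X, beta : A0 -> X) with k1 f1 = beta a
   extends along (b, f0) ([weak_pushout]), and uniquely ([jointly_epi b f0]).
   - Full cofaithfulness is equivalent to the square being a pushout: a
     pushout square is fully cofaithful against any target, and testing
     against the zero maps X -> 0 (0 is projective) recovers the pushout.
   - The square is a pushout iff h : Coker a -> Coker b is iso and
     g : Ker a -> Ker b is epi.  Uniqueness of extensions is epimorphy of h;
     existence yields a retraction of h and, via the pushout of a and f1
     built as a cokernel on B1 + A0, liftings of maps from projectives along
     g.  Conversely, relations b u + f0 v = 0 tested on projectives are
     killed by every cocone when h is mono and g is epi; with enough
     projectives this lets cocones factor through the epi (b, f0). *)
From Pilot Require Import Defs.
From HB Require Import structures.
From mathcomp Require Import all_boot all_algebra.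
Set Implicit Arguments. Unset Strict Implicit. Unset Printing Implicit Defensive.
Import GRing.Theory.
Local Open Scope ring_scope.

Local Notation "g ⊙ f" := (mcomp g f) (at level 40, left associativity).

Section Preadditive.
Variable C : PreAddCat.

(* Associativity of composition (the name [compA] is taken by ssrfun). *)
Lemma mcompA (A B C' D : C) (h : Mor C' D) (g : Mor B C') (f : Mor A B) :
  h ⊙ (g ⊙ f) = h ⊙ g ⊙ f.
Proof. exact: Defs.compA. Qed.

Lemma comp0l (A B C' : C) (f : Mor A B) : (0 : Mor B C') ⊙ f = 0.
Proof. by apply: (@addrI _ ((0 : Mor B C') ⊙ f)); rewrite -compDl !addr0. Qed.

Lemma comp0r (A B C' : C) (g : Mor B C') : g ⊙ (0 : Mor A B) = 0.
Proof. by apply: (@addrI _ (g ⊙ (0 : Mor A B))); rewrite -compDr !addr0. Qed.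

Lemma compNl (A B C' : C) (g : Mor B C') (f : Mor A B) : (- g) ⊙ f = - (g ⊙ f).
Proof. by apply: (@addrI _ (g ⊙ f)); rewrite -compDl !subrr comp0l. Qed.

Lemma compNr (A B C' : C) (g : Mor B C') (f : Mor A B) : g ⊙ (- f) = - (g ⊙ f).
Proof. by apply: (@addrI _ (g ⊙ f)); rewrite -compDr !subrr comp0r. Qed.

Lemma compBl (A B C' : C) (g g' : Mor B C') (f : Mor A B) :
  (g - g') ⊙ f = g ⊙ f - g' ⊙ f.
Proof. by rewrite compDl compNl. Qed.

Lemma compBr (A B C' : C) (g : Mor B C') (f f' : Mor A B) :
  g ⊙ (f - f') = g ⊙ f - g ⊙ f'.
Proof. by rewrite compDr compNr. Qed.

Lemma epi_of_zero_cancel (A B : C) (f : Mor A B) :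
  (forall (X : C) (t : Mor B X), t ⊙ f = 0 -> t = 0) -> is_epi f.
Proof.
move=> Hf X u v E; apply/eqP; rewrite -subr_eq0; apply/eqP.
by apply: Hf; rewrite compBl E subrr.
Qed.

Definition jointly_epi (A B Y : C) (u : Mor A Y) (v : Mor B Y) : Prop :=
  forall (X : C) (t : Mor Y X), t ⊙ u = 0 -> t ⊙ v = 0 -> t = 0.

Lemma kernel_mono (A B K : C) (f : Mor A B) (k : Mor K A) :
  is_kernel f k -> is_mono k.
Proof.
move=> [fk0 univ] X u v E.
have fku : f ⊙ (k ⊙ u) = 0 by rewrite mcompA fk0 comp0l.
have [w [_ w_uniq]] := univ X _ fku.
by rewrite -(w_uniq u erefl) (w_uniq v (esym E)).
Qed.

Lemma cokernel_epi (A B Q : C) (f : Mor A B) (c : Mor B Q) :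
  is_cokernel f c -> is_epi c.
Proof.
move=> [cf0 univ] X u v E.
have ucf : u ⊙ c ⊙ f = 0 by rewrite -mcompA cf0 comp0r.
have [w [_ w_uniq]] := univ X _ ucf.
by rewrite -(w_uniq u erefl) (w_uniq v (esym E)).
Qed.

Lemma mono_comp (A B D : C) (f : Mor A B) (g : Mor B D) :
  is_mono g -> is_mono f -> is_mono (g ⊙ f).
Proof. by move=> mono_g mono_f X u v E; apply/mono_f/mono_g; rewrite !mcompA. Qed.

Lemma epi_of_comp_epi (A B D : C) (w : Mor A B) (g : Mor B D) :
  is_epi (g ⊙ w) -> is_epi g.
Proof. by move=> epi_gw X u v E; apply: epi_gw; rewrite !mcompA E. Qed.

Lemma iso_mono (A B : C) (h : Mor A B) : is_iso h -> is_mono h.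
Proof.
move=> [k [kh _]] X u v E.
by rewrite -[u]comp1m -kh -mcompA E mcompA kh comp1m.
Qed.

Lemma iso_epi (A B : C) (h : Mor A B) : is_iso h -> is_epi h.
Proof.
move=> [k [_ hk]] X u v E.
by rewrite -[u]compm1 -hk mcompA E -mcompA hk compm1.
Qed.

Lemma iso_of_split_mono_epi (A B : C) (h : Mor A B) (k : Mor B A) :
  k ⊙ h = idm A -> is_epi h -> is_iso h.
Proof.
move=> kh epi_h; exists k; split=> //.
by apply: epi_h; rewrite -mcompA kh compm1 comp1m.
Qed.

Lemma zero_object_projective (Z : C) : idm Z = 0 -> projective Z.
Proof. by move=> Z0 A B e x _; exists 0; rewrite comp0r -[x]compm1 Z0 comp0r. Qed.

Lemma to_zero_object (Z X : C) (x : Mor X Z) : idm Z = 0 -> x = 0.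
Proof. by move=> Z0; rewrite -[x]comp1m Z0 comp0l. Qed.

End Preadditive.

Section Biproducts.
Variable C : PreAddCat.

Definition is_biproduct (A B S : C) (i1 : Mor A S) (i2 : Mor B S)
    (p1 : Mor S A) (p2 : Mor S B) : Prop :=
  [/\ p1 ⊙ i1 = idm A, p2 ⊙ i2 = idm B, p1 ⊙ i2 = 0,
      p2 ⊙ i1 = 0 & i1 ⊙ p1 + i2 ⊙ p2 = idm S].

Variables (A B S : C) (i1 : Mor A S) (i2 : Mor B S) (p1 : Mor S A) (p2 : Mor S B).
Hypothesis bip : is_biproduct i1 i2 p1 p2.

Lemma biproduct_proj1 (X : C) (x : Mor X A) (y : Mor X B) :
  p1 ⊙ (i1 ⊙ x + i2 ⊙ y) = x.
Proof. by case: bip => P1 _ P3 _ _; rewrite compDr !mcompA P1 P3 comp1m comp0l addr0. Qed.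

Lemma biproduct_proj2 (X : C) (x : Mor X A) (y : Mor X B) :
  p2 ⊙ (i1 ⊙ x + i2 ⊙ y) = y.
Proof. by case: bip => _ P2 _ P4 _; rewrite compDr !mcompA P2 P4 comp1m comp0l add0r. Qed.

Definition copair (Y : C) (u : Mor A Y) (v : Mor B Y) : Mor S Y := u ⊙ p1 + v ⊙ p2.

Lemma copair_i1 (Y : C) (u : Mor A Y) (v : Mor B Y) : copair u v ⊙ i1 = u.
Proof. by case: bip => P1 _ _ P4 _; rewrite compDl -!mcompA P1 P4 compm1 comp0r addr0. Qed.

Lemma copair_i2 (Y : C) (u : Mor A Y) (v : Mor B Y) : copair u v ⊙ i2 = v.
Proof. by case: bip => _ P2 P3 _ _; rewrite compDl -!mcompA P2 P3 compm1 comp0r add0r. Qed.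

Lemma copair_comp (Y X : C) (u : Mor A Y) (v : Mor B Y) (w : Mor X S) :
  copair u v ⊙ w = u ⊙ (p1 ⊙ w) + v ⊙ (p2 ⊙ w).
Proof. by rewrite compDl !mcompA. Qed.

Lemma copair_epi (Y : C) (u : Mor A Y) (v : Mor B Y) :
  jointly_epi u v -> is_epi (copair u v).
Proof.
move=> joint; apply: epi_of_zero_cancel => X t t0.
by apply: joint; [rewrite -(copair_i1 u v) | rewrite -(copair_i2 u v)];
  rewrite mcompA t0 comp0l.
Qed.

End Biproducts.

Section Abelian.
Variable C : PreAddCat.
Hypothesis HC : abelian C.

Lemma zero_object_exists : exists Z : C, idm Z = 0.
Proof. by case: HC. Qed.

Lemma biproduct_exists (A B : C) :
  exists (S : C) (i1 : Mor A S) (i2 : Mor B S) (p1 : Mor S A) (p2 : Mor S B),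
    is_biproduct i1 i2 p1 p2.
Proof. by case: HC => _ [bip _]; apply: bip. Qed.

Lemma kernel_exists (A B : C) (f : Mor A B) : exists (K : C) (k : Mor K A), is_kernel f k.
Proof. by case: HC => _ [_ [ker _]]; apply: ker. Qed.

Lemma cokernel_exists (A B : C) (f : Mor A B) :
  exists (Q : C) (c : Mor B Q), is_cokernel f c.
Proof. by case: HC => _ [_ [_ [coker _]]]; apply: coker. Qed.

Lemma mono_is_kernel (A B : C) (m : Mor A B) :
  is_mono m -> exists (D : C) (f : Mor B D), is_kernel f m.
Proof. by case: HC => _ [_ [_ [_ [monos _]]]]; apply: monos. Qed.

Lemma epi_is_cokernel (A B : C) (e : Mor A B) :
  is_epi e -> exists (D : C) (f : Mor D A), is_cokernel f e.
Proof. by case: HC => _ [_ [_ [_ [_ epis]]]]; apply: epis. Qed.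

(* If c is a cokernel of f and i a kernel of c, then f factors through i by
   an epimorphism: in an abelian category, the image of f is Ker(Coker f). *)
Lemma coimage_epi (A B Q I : C) (f : Mor A B) (c : Mor B Q) (i : Mor I B)
    (q : Mor A I) :
  is_cokernel f c -> is_kernel c i -> i ⊙ q = f -> is_epi q.
Proof.
move=> hc hi iq; apply: epi_of_zero_cancel => Y t tq.
have [J [m hm]] := kernel_exists t.
have [q' [mq' _]] := hm.2 _ q tq.
have [D [phi hphi]] := mono_is_kernel (mono_comp (kernel_mono hi) (kernel_mono hm)).
have phi_f : phi ⊙ f = 0.
  by rewrite -iq -mq' [i ⊙ _]mcompA mcompA hphi.1 comp0l.
have [psi [psi_c _]] := hc.2 _ phi phi_f.
have phi_i : phi ⊙ i = 0 by rewrite -psi_c -mcompA hi.1 comp0r.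
have [s [ims _]] := hphi.2 _ i phi_i.
have ms : m ⊙ s = idm I by apply: (kernel_mono hi); rewrite mcompA ims compm1.
by rewrite -[t]compm1 -ms mcompA hm.1 comp0l.
Qed.

Lemma projective_lift_exact (A B Q P : C) (f : Mor A B) (c : Mor B Q) (v : Mor P B) :
  is_cokernel f c -> projective P -> c ⊙ v = 0 -> exists w : Mor P A, f ⊙ w = v.
Proof.
move=> hc pP cv.
have [I [i hi]] := kernel_exists c.
have [q [iq _]] := hi.2 _ f hc.1.
have [t [it _]] := hi.2 _ v cv.
have [w qw] := pP _ _ q t (coimage_epi hc hi iq).
by exists w; rewrite -iq -mcompA qw it.
Qed.

Hypothesis HP : enough_projectives C.

Lemma factor_through_epi (S T Y : C) (d : Mor S T) (phi : Mor S Y) :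
  is_epi d ->
  (forall (P : C) (u : Mor P S), projective P -> d ⊙ u = 0 -> phi ⊙ u = 0) ->
  exists alpha : Mor T Y, alpha ⊙ d = phi.
Proof.
move=> epi_d kills.
have [D [k hk]] := epi_is_cokernel epi_d.
have phi_k : phi ⊙ k = 0.
  have [P [e [pP epi_e]]] := HP D.
  apply: epi_e; rewrite comp0l -mcompA; apply: kills => //.
  by rewrite mcompA hk.1 comp0l.
by have [alpha [alpha_d _]] := hk.2 _ phi phi_k; exists alpha.
Qed.

End Abelian.

Section Square.
Variable C : PreAddCat.
Variables (A1 A0 B1 B0 : C) (a : Mor A1 A0) (b : Mor B1 B0).
Variables (f0 : Mor A0 B0) (f1 : Mor A1 B1).

(* Together with [jointly_epi b f0],
   which makes the extension unique, this says the square is a pushout. *)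
Definition weak_pushout : Prop :=
  forall (X : C) (k1 : Mor B1 X) (beta : Mor A0 X), k1 ⊙ f1 = beta ⊙ a ->
    exists alpha : Mor B0 X, alpha ⊙ b = k1 /\ alpha ⊙ f0 = beta.

(* A pushout square is fully cofaithful, even against arbitrary targets x:
   the 2-arrow beta extends along the pushout, and uniqueness of extensions
   gives both the remaining 2-arrow equation and faithfulness. *)
Lemma fully_cofaithful_of_pushout :
  weak_pushout -> jointly_epi b f0 -> fully_cofaithful_c a b f0 f1.
Proof.
move=> ext joint X1 X0 x _; split.
- move=> k0 l0 k1 l1 hk hl beta [beta_a beta_x].
  have cocone : (k1 - l1) ⊙ f1 = beta ⊙ a by rewrite compBl.
  have [alpha [alpha_b alpha_f0]] := ext _ _ _ cocone.
  exists alpha; split=> //; split=> //.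
  apply/eqP; rewrite -subr_eq0; apply/eqP; apply: joint.
  + by rewrite !compBl -mcompA alpha_b -hk -hl compBr subrr.
  + by rewrite !compBl -mcompA alpha_f0 -beta_x subrr.
- move=> k0 l0 k1 l1 _ _ alpha alpha' [alpha_b _] [alpha'_b _] E.
  apply/eqP; rewrite -subr_eq0; apply/eqP.
  by apply: joint; rewrite compBl ?E -?alpha_b -?alpha'_b subrr.
Qed.

(* Conversely, testing full cofaithfulness against the zero maps X -> Z
   into a zero object (which is projective) shows the square is a pushout. *)
Lemma fully_cofaithful_iff_pushout (Z : C) : idm Z = 0 ->
  fully_cofaithful_c a b f0 f1 <-> weak_pushout /\ jointly_epi b f0.
Proof.
move=> Z0; split=> [ff | [ext joint]]; last exact: fully_cofaithful_of_pushout.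
have zero_mor (X : C) (k : Mor B0 Z) (l : Mor B1 X) : arrow_mor b 0 k l.
  by rewrite /arrow_mor (to_zero_object k Z0) !comp0l.
split.
- move=> X k1 beta cocone.
  have [full _] := ff X Z 0 (zero_object_projective Z0).
  have beta_2arrow : two_arrow a (0 : Mor X Z) (0 ⊙ f0) (0 ⊙ f0) (k1 ⊙ f1) (0 ⊙ f1) beta.
    by split; rewrite ?comp0l ?subr0 ?subrr.
  have [alpha [[alpha_b _] alpha_f0]] :=
    full 0 0 k1 0 (zero_mor _ _ _) (zero_mor _ _ _) beta beta_2arrow.
  by exists alpha; rewrite -alpha_b subr0.
- move=> X t tb tf0.
  have [_ faithful] := ff X Z 0 (zero_object_projective Z0).
  apply: (faithful 0 0 0 0 (zero_mor _ _ _) (zero_mor _ _ _)); rewrite ?tf0 ?comp0l //.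
  + by split; rewrite ?subrr ?tb ?comp0l.
  + by split; rewrite ?subrr ?comp0l ?comp0r.
Qed.

End Square.

Section InducedMaps.
Variable C : PreAddCat.
Variables (A1 A0 B1 B0 : C) (a : Mor A1 A0) (b : Mor B1 B0).
Variables (f0 : Mor A0 B0) (f1 : Mor A1 B1).
Hypothesis hf : arrow_mor a b f0 f1.
Variables (KA KB : C) (ka : Mor KA A1) (kb : Mor KB B1) (g : Mor KA KB).
Hypotheses (hka : is_kernel a ka) (hkb : is_kernel b kb) (hg : kb ⊙ g = f1 ⊙ ka).
Variables (QA QB : C) (ca : Mor A0 QA) (cb : Mor B0 QB) (h : Mor QA QB).
Hypotheses (hca : is_cokernel a ca) (hcb : is_cokernel b cb) (hh : h ⊙ ca = cb ⊙ f0).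

Lemma jointly_epi_of_coker_epi : is_epi h -> jointly_epi b f0.
Proof.
move=> epi_h X t tb tf0.
have [t' [t'_cb _]] := hcb.2 _ t tb.
have t'h : t' ⊙ h = 0.
  by apply: (cokernel_epi hca); rewrite -mcompA hh mcompA t'_cb tf0 comp0l.
have t'0 : t' = 0 by apply: epi_h; rewrite t'h comp0l.
by rewrite -t'_cb t'0 comp0l.
Qed.

Lemma coker_epi_of_jointly_epi : jointly_epi b f0 -> is_epi h.
Proof.
move=> joint; apply: epi_of_zero_cancel => X t th.
apply: (cokernel_epi hcb); rewrite comp0l; apply: joint.
- by rewrite -mcompA hcb.1 comp0r.
- by rewrite -mcompA -hh mcompA th comp0l.
Qed.

(* Extending the cocone (0, ca) along a weak pushout yields a retraction of h. *)
Lemma coker_split_mono_of_weak_pushout :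
  weak_pushout a b f0 f1 -> exists k : Mor QB QA, k ⊙ h = idm QA.
Proof.
move=> ext.
have cocone : (0 : Mor B1 QA) ⊙ f1 = ca ⊙ a by rewrite comp0l hca.1.
have [alpha [alpha_b alpha_f0]] := ext _ _ _ cocone.
have [k [k_cb _]] := hcb.2 _ alpha alpha_b.
exists k; apply: (cokernel_epi hca).
by rewrite -mcompA hh mcompA k_cb alpha_f0 comp1m.
Qed.

Hypothesis HC : abelian C.
Hypothesis HP : enough_projectives C.

(* Extending along a weak pushout the universal cocone of a and f1, namely
   the cokernel c of (f1, -a) : A1 -> B1 + A0, shows that every map from a
   projective into Ker b lifts along g; hence g is epi. *)
Lemma ker_epi_of_weak_pushout : weak_pushout a b f0 f1 -> is_epi g.
Proof.
move=> ext.
have [S [i1 [i2 [p1 [p2 bip]]]]] := biproduct_exists HC B1 A0.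
have [X [c hc]] := cokernel_exists HC (i1 ⊙ f1 + i2 ⊙ (- a)).
have cocone : c ⊙ i1 ⊙ f1 = c ⊙ i2 ⊙ a.
  move: hc.1; rewrite compDr !compNr !mcompA => /eqP.
  by rewrite subr_eq0 => /eqP.
have [alpha [alpha_b _]] := ext _ _ _ cocone.
have [P [p [pP epi_p]]] := HP KB.
have c_kbp : c ⊙ (i1 ⊙ (kb ⊙ p) + i2 ⊙ (0 : Mor P A0)) = 0.
  rewrite comp0r addr0 mcompA -alpha_b mcompA -(mcompA alpha) hkb.1.
  by rewrite comp0r comp0l.
have [w rw] := projective_lift_exact HC hc pP c_kbp.
have f1w : f1 ⊙ w = kb ⊙ p.
  by have := congr1 (mcomp p1) rw; rewrite mcompA !(biproduct_proj1 bip).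
have aw : a ⊙ w = 0.
  have := congr1 (mcomp p2) rw; rewrite mcompA !(biproduct_proj2 bip) compNl.
  by move/eqP; rewrite oppr_eq0 => /eqP.
have [w' [ka_w' _]] := hka.2 _ w aw.
have gw' : g ⊙ w' = p.
  by apply: (kernel_mono hkb); rewrite mcompA hg -mcompA ka_w' f1w.
by apply: (@epi_of_comp_epi _ _ _ _ w'); rewrite gw'.
Qed.

(* When h is mono and g is epi, every relation b u + f0 v = 0 tested on a
   projective comes from relations in A (through a) and in Ker b (through g),
   and is therefore killed by every cocone (k1, beta) of the square. *)
Lemma cocone_kills_relations (X P : C) (k1 : Mor B1 X) (beta : Mor A0 X)
    (u : Mor P B1) (v : Mor P A0) :
  is_mono h -> is_epi g -> projective P -> k1 ⊙ f1 = beta ⊙ a ->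
  b ⊙ u + f0 ⊙ v = 0 -> k1 ⊙ u + beta ⊙ v = 0.
Proof.
move=> mono_h epi_g pP cocone rel.
have f0v : f0 ⊙ v = - (b ⊙ u) by apply/eqP; rewrite -addr_eq0 addrC rel.
have ca_v : ca ⊙ v = 0.
  apply: mono_h; rewrite comp0r mcompA hh -mcompA f0v compNr mcompA hcb.1.
  by rewrite comp0l oppr0.
have [w aw] := projective_lift_exact HC hca pP ca_v.
have b_uw : b ⊙ (u + f1 ⊙ w) = 0 by rewrite compDr mcompA hf -mcompA aw rel.
have [z [kb_z _]] := hkb.2 _ _ b_uw.
have [z' gz'] := pP _ _ g z epi_g.
have u_eq : u = f1 ⊙ (ka ⊙ z') - f1 ⊙ w.
  by rewrite mcompA -hg -mcompA gz' kb_z addrK.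
rewrite u_eq -aw compBr !mcompA cocone -(mcompA beta a ka) hka.1.
by rewrite comp0r comp0l sub0r addNr.
Qed.

(* Conversely, if h is mono, (b, f0) jointly epi and g epi, a cocone
   (k1, beta) extends along the epimorphism (b, f0) : B1 + A0 -> B0, since
   it kills its kernel. *)
Lemma weak_pushout_of_coker_mono :
  is_mono h -> jointly_epi b f0 -> is_epi g -> weak_pushout a b f0 f1.
Proof.
move=> mono_h joint epi_g X k1 beta cocone.
have [S [i1 [i2 [p1 [p2 bip]]]]] := biproduct_exists HC B1 A0.
have [alpha alpha_d] : exists alpha, alpha ⊙ copair p1 p2 b f0 = copair p1 p2 k1 beta.
  apply: (factor_through_epi HC HP (copair_epi bip joint)) => P w pP.
  rewrite !copair_comp; exact: cocone_kills_relations.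
exists alpha; split.
- by rewrite -(copair_i1 bip b f0) mcompA alpha_d (copair_i1 bip).
- by rewrite -(copair_i2 bip b f0) mcompA alpha_d (copair_i2 bip).
Qed.

Lemma pushout_iff_coker_iso_ker_epi :
  weak_pushout a b f0 f1 /\ jointly_epi b f0 <-> is_iso h /\ is_epi g.
Proof.
split=> [[ext joint] | [iso_h epi_g]].
- have [k kh] := coker_split_mono_of_weak_pushout ext.
  split; last exact: ker_epi_of_weak_pushout.
  exact: iso_of_split_mono_epi kh (coker_epi_of_jointly_epi joint).
- have joint := jointly_epi_of_coker_epi (iso_epi iso_h).
  by split; first exact: weak_pushout_of_coker_mono (iso_mono iso_h) joint epi_g.
Qed.

End InducedMaps.

Unset Implicit Arguments.

Theorem lemma3p4 (C : PreAddCat) (HC : abelian C) (HP : enough_projectives C)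
  (A1 A0 B1 B0 : C) (a : Mor A1 A0) (b : Mor B1 B0)
  (pA : projective A0) (pB : projective B0)
  (f0 : Mor A0 B0) (f1 : Mor A1 B1) (hf : arrow_mor a b f0 f1)
  (KA KB : C) (ka : Mor KA A1) (kb : Mor KB B1)
  (hka : is_kernel a ka) (hkb : is_kernel b kb)
  (g : Mor KA KB) (hg : mcomp kb g = mcomp f1 ka)
  (QA QB : C) (ca : Mor A0 QA) (cb : Mor B0 QB)
  (hca : is_cokernel a ca) (hcb : is_cokernel b cb)
  (h : Mor QA QB) (hh : mcomp h ca = mcomp cb f0) :
  fully_cofaithful_c a b f0 f1 <-> is_iso h /\ is_epi g.
Proof.
have [Z Z0] := zero_object_exists HC.
exact: iff_trans (fully_cofaithful_iff_pushout a b f0 f1 Z0)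
  (pushout_iff_coker_iso_ker_epi hf hka hkb hg hca hcb hh HC HP).
Qed.
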